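(* Let $\mathcal{X},\mathcal{Y}$ be finite alphabets, $P_X$ a fully supported PMF on $\mathcal{X}$ and $P_{Y|X}$ a transition kernel from $\mathcal{X}$ to $\mathcal{Y}$; write $P_{XY}=P_X\otimes P_{Y|X}$. Let $K\geq 2$, let $X_1,\ldots,X_K$ be IID with law $P_X$, let $\pi\in S_K$ be a cycle of length $K$, and set $\tilde X_j=X_{\pi(j)}$ for $j\in[K]$. Then $$\mathbb{E}\Big[\exp\Big(-\sum_{j=1}^K d_{P_{Y|X}}(X_j,\tilde X_j)\Big)\Big]\leq e^{-K\psi_2(P_{XY})},$$ where $\psi_2(P_{XY})=\min_{Q_{X_1X_2}\in\mathcal{P}(\mathcal{X}^2)}\big\{\tfrac12 D_{\mathrm{KL}}(Q_{X_1X_2}\|P_X^{\otimes2})+d_{P_{Y|X}}(Q_{X_1X_2})\big\}$.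
   Context: For $x_1,x_2\in\mathcal{X}$, $d_{P_{Y|X}}(x_1,x_2)=-\log\sum_{y\in\mathcal{Y}}\sqrt{P_{Y|X}(y|x_1)P_{Y|X}(y|x_2)}$ (Bhattacharyya distance), and for a joint PMF $Q_{X_1X_2}$ on $\mathcal{X}^2$, $d_{P_{Y|X}}(Q_{X_1X_2})=\sum_{x_1,x_2}Q_{X_1X_2}(x_1,x_2)d_{P_{Y|X}}(x_1,x_2)$. $\mathcal{P}(\mathcal{X}^2)$ denotes the probability simplex on $\mathcal{X}^2$. *)

From HB Require Import structures.
From mathcomp Require Import all_boot all_order all_algebra all_fingroup.
From mathcomp Require Import all_classical all_reals all_analysis.
Set Implicit Arguments. Unset Strict Implicit. Unset Printing Implicit Defensive.
Import Order.TTheory GRing.Theory Num.Theory.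
Local Open Scope classical_set_scope.
Local Open Scope ring_scope.

Section Defs.
Variables (R : realType) (X Y : finType).

Definition full_pmf (P : X -> R) : Prop :=
  (forall x, 0 < P x) /\ \sum_(x : X) P x = 1.

Definition trans_kernel (W : X -> Y -> R) : Prop :=
  forall x, (forall y, 0 <= W x y) /\ \sum_(y : Y) W x y = 1.

Definition pmf2 (Q : X * X -> R) : Prop :=
  (forall p, 0 <= Q p) /\ \sum_(p : X * X) Q p = 1.

Definition bhat_coef (W : X -> Y -> R) (x1 x2 : X) : R :=
  \sum_(y : Y) Num.sqrt (W x1 y * W x2 y).

Definition bhat_dist (W : X -> Y -> R) (x1 x2 : X) : \bar R :=
  if bhat_coef W x1 x2 == 0 then +oo%E else (- ln (bhat_coef W x1 x2))%:E.

Definition bhat_dist2 (W : X -> Y -> R) (Q : X * X -> R) : \bar R :=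
  (\sum_(p : X * X) (Q p)%:E * bhat_dist W p.1 p.2)%E.

(* D_KL(Q || P_X^{(x)2}), convention 0 ln 0 = 0 (mathcomp: ln 0 = 0) *)
Definition KL2 (P : X -> R) (Q : X * X -> R) : R :=
  \sum_(p : X * X) Q p * ln (Q p / (P p.1 * P p.2)).

(* psi_2(P_XY) as the min (taken as infimum) over the simplex P(X^2) *)
Definition psi2 (P : X -> R) (W : X -> Y -> R) : \bar R :=
  ereal_inf [set ((KL2 P Q / 2)%:E + bhat_dist2 W Q)%E | Q in pmf2].

Definition full_cycle (K : nat) (pi : {perm 'I_K}) : Prop :=
  forall i : 'I_K, #|porbit pi i| = K.

(* E[exp(-sum_j d(X_j, X_{pi j}))] for X_1..X_K iid ~ P *)
Definition cyc_expect (P : X -> R) (W : X -> Y -> R) (K : nat)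
    (pi : {perm 'I_K}) : \bar R :=
  (\sum_(x : {ffun 'I_K -> X})
     (\prod_(i < K) P (x i))%:E *
     expeR (- \sum_(j < K) bhat_dist W (x j) (x (pi j))))%E.

End Defs.

From HB Require Import structures.
From mathcomp Require Import all_boot all_order all_algebra all_fingroup.
From mathcomp Require Import all_classical all_reals all_analysis.
From mathcomp Require Import ring lra.
Set Implicit Arguments. Unset Strict Implicit. Unset Printing Implicit Defensive.
Import Order.TTheory GRing.Theory Num.Theory.
Local Open Scope ring_scope.

(* Since exp (-d(a,b)) is the Bhattacharyya coefficient B(a,b), the expectation
   equals sum_x prod_j G(x_j, x_(pi j)) for the kernel
   G(a,b) = sqrt(P a) B(a,b) sqrt(P b).  As pi is a single K-cycle, this sum is
   the trace of G^K, and Cauchy-Schwarz together with the submultiplicativity of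
   the Frobenius norm bounds it by F^(K/2), where F = sum_(a,b) G(a,b)^2.
   Conversely, the tilted law Q = G^2 / F is feasible for psi_2 and gives
   KL(Q || P (x) P) / 2 + d(Q) = - ln F / 2, so psi_2 <= - ln F / 2. *)

Section CauchySchwarz.
Variables (R : realDomainType) (I : finType).

Lemma cauchy_schwarz_sum (u v : I -> R) :
  (\sum_i u i * v i) ^+ 2 <= (\sum_i u i ^+ 2) * (\sum_i v i ^+ 2).
Proof.
set Suv := \sum_i u i * v i; set Su := \sum_i u i ^+ 2; set Sv := \sum_i v i ^+ 2.
have lagrange : \sum_i \sum_j (u i * v j - u j * v i) ^+ 2 = 2 * (Su * Sv - Suv ^+ 2).
  have SuSv : \sum_i \sum_j u i ^+ 2 * v j ^+ 2 = Su * Sv.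
    by rewrite mulr_suml; apply: eq_bigr => i _; rewrite mulr_sumr.
  have SvSu : \sum_i \sum_j u j ^+ 2 * v i ^+ 2 = Su * Sv.
    by rewrite exchange_big.
  have Suv2 : \sum_i \sum_j u i * v i * (u j * v j) = Suv ^+ 2.
    by rewrite expr2 mulr_suml; apply: eq_bigr => i _; rewrite mulr_sumr.
  have -> : \sum_i \sum_j (u i * v j - u j * v i) ^+ 2 =
      \sum_i \sum_j u i ^+ 2 * v j ^+ 2 + \sum_i \sum_j u j ^+ 2 * v i ^+ 2
      - 2 * \sum_i \sum_j u i * v i * (u j * v j).
    rewrite mulr_sumr -big_split -sumrB /=; apply: eq_bigr => i _.
    rewrite mulr_sumr -big_split -sumrB /=; apply: eq_bigr => j _; ring.
  rewrite SuSv SvSu Suv2; ring.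
have : 0 <= \sum_i \sum_j (u i * v j - u j * v i) ^+ 2.
  by do 2!apply: sumr_ge0 => ? _; exact: sqr_ge0.
by rewrite lagrange pmulr_rge0 // subr_ge0.
Qed.
End CauchySchwarz.

Section KernelPaths.
Variables (R : comNzRingType) (X : finType).
Implicit Types (G H h : X -> X -> R).

Definition kmul G H a b := \sum_c G a c * H c b.

Fixpoint kpow G n : X -> X -> R :=
  if n is n'.+1 then kmul G (kpow G n') else fun a b => (a == b)%:R.

Lemma kpow1 G a b : kpow G 1 a b = G a b.
Proof.
rewrite /= /kmul (bigD1 b) //= eqxx mulr1 big1 ?addr0 // => c /negbTE ->.
by rewrite mulr0.
Qed.

Definition ffun_cons n (c : X) (f : {ffun 'I_n -> X}) : {ffun 'I_n.+1 -> X} :=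
  [ffun i => if unlift ord0 i is Some j then f j else c].

Lemma ffun_cons0 n c (f : {ffun 'I_n -> X}) : ffun_cons c f ord0 = c.
Proof. by rewrite ffunE unlift_none. Qed.

Lemma ffun_consS n c (f : {ffun 'I_n -> X}) j : ffun_cons c f (lift ord0 j) = f j.
Proof. by rewrite ffunE liftK. Qed.

Lemma sum_ffun_cons n (F : {ffun 'I_n.+1 -> X} -> R) :
  \sum_y F y = \sum_c \sum_(f : {ffun 'I_n -> X}) F (ffun_cons c f).
Proof.
rewrite pair_big /= (reindex (fun p : X * {ffun 'I_n -> X} => ffun_cons p.1 p.2)) //=.
exists (fun y : {ffun 'I_n.+1 -> X} => (y ord0, [ffun j => y (lift ord0 j)])).
  move=> [c f] _ /=; rewrite ffun_cons0; congr (_, _).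
  by apply/ffunP => j; rewrite ffunE ffun_consS.
move=> y _; apply/ffunP => i; rewrite ffunE.
by case: unliftP => [j ->|->]; rewrite ?ffunE.
Qed.

Lemma sum_path_prod n G h :
  \sum_(y : {ffun 'I_n.+1 -> X})
    (\prod_(k < n) G (y (widen_ord (leqnSn n) k)) (y (lift ord0 k))) *
    h (y ord0) (y ord_max)
  = \sum_a \sum_b kpow G n a b * h a b.
Proof.
elim: n h => [|n IH] h.
  rewrite sum_ffun_cons; apply: eq_bigr => c _.
  have -> : (ord_max : 'I_1) = ord0 by apply: val_inj.
  under eq_bigr do rewrite big_ord0 mul1r ffun_cons0.
  rewrite sumr_const card_ffun card_ord expn0 mulr1n.
  rewrite (bigD1 c) //= eqxx mul1r big1 ?addr0 // => b /negbTE.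
  by rewrite eq_sym => ->; rewrite mul0r.
have widen0 : widen_ord (leqnSn n.+1) ord0 = ord0 by apply: val_inj.
have widenS k : widen_ord (leqnSn n.+1) (lift ord0 k) = lift ord0 (widen_ord (leqnSn n) k).
  exact: val_inj.
have maxS : (ord_max : 'I_n.+2) = lift ord0 ord_max by apply: val_inj.
rewrite sum_ffun_cons.
under eq_bigr => c _.
  under eq_bigr => f _.
    rewrite big_ord_recl widen0 maxS !ffun_cons0 !ffun_consS.
    under eq_bigr => k _ do rewrite widenS !ffun_consS.
    rewrite -mulrA [_ * (_ * h _ _)]mulrCA.
  over.
  rewrite (IH (fun a b => G c a * h c b)).
over.
apply: eq_bigr => c _ /=; rewrite exchange_big; apply: eq_bigr => b _.
by rewrite /kmul mulr_suml; apply: eq_bigr => a _; ring.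
Qed.

Lemma sum_cycle_prod n G :
  \sum_(y : {ffun 'I_n.+2 -> X}) \prod_(k < n.+2) G (y k) (y (ordS k))
  = \sum_a \sum_b kpow G n.+1 a b * G b a.
Proof.
rewrite -(sum_path_prod n.+1 G (fun a b => G b a)); apply: eq_bigr => y _.
rewrite big_ord_recr /=.
have -> : ordS (ord_max : 'I_n.+2) = ord0 by apply: val_inj; rewrite /= modnn.
congr (_ * _); apply: eq_bigr => k _.
have -> // : ordS (widen_ord (leqnSn n.+1) k) = lift ord0 k.
by apply: val_inj; rewrite /= modn_small // ltnS.
Qed.

End KernelPaths.

Section FrobeniusBounds.
Variables (R : realDomainType) (X : finType).
Implicit Types (G H : X -> X -> R).

Definition frob2 G := \sum_a \sum_b G a b ^+ 2.

Lemma frob2_ge0 G : 0 <= frob2 G.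
Proof. by do 2!apply: sumr_ge0 => ? _; exact: sqr_ge0. Qed.

Lemma frob2_kmul_le G H : frob2 (kmul G H) <= frob2 G * frob2 H.
Proof.
rewrite /frob2 mulr_suml; apply: ler_sum => a _.
rewrite exchange_big mulr_sumr; apply: ler_sum => b _.
exact: cauchy_schwarz_sum.
Qed.

Lemma frob2_kpow_le G n : frob2 (kpow G n.+1) <= frob2 G ^+ n.+1.
Proof.
elim: n => [|n IH].
  by rewrite expr1 /frob2; under eq_bigr do under eq_bigr do rewrite kpow1.
rewrite exprS; apply: le_trans (frob2_kmul_le _ _) _.
by apply: ler_wpM2l; [exact: frob2_ge0|exact: IH].
Qed.

Lemma sqr_sum_trace_mul_le G H :
  (\sum_a \sum_b G a b * H b a) ^+ 2 <= frob2 G * frob2 H.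
Proof.
have -> : frob2 H = \sum_a \sum_b H b a ^+ 2 by rewrite /frob2 exchange_big.
rewrite /frob2 !pair_bigA /=; exact: cauchy_schwarz_sum.
Qed.

Lemma sqr_sum_cycle_prod_le n G :
  (\sum_(y : {ffun 'I_n.+2 -> X}) \prod_(k < n.+2) G (y k) (y (ordS k))) ^+ 2
  <= frob2 G ^+ n.+2.
Proof.
rewrite sum_cycle_prod; apply: le_trans (sqr_sum_trace_mul_le _ _) _.
by rewrite exprSr ler_wpM2r ?frob2_ge0 ?frob2_kpow_le.
Qed.

End FrobeniusBounds.

Lemma full_cycle_conj_ordS n (pi : {perm 'I_n.+1}) : full_cycle pi ->
  exists2 sg : 'I_n.+1 -> 'I_n.+1, injective sg & forall k, pi (sg k) = sg (ordS k).
Proof.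
move=> /(_ ord0) orbit_size; exists (fun k => iter k pi ord0).
  move=> k1 k2; rewrite -(nth_traject pi (ltn_ord k1)) -(nth_traject pi (ltn_ord k2)).
  have := uniq_traject_porbit pi ord0; rewrite orbit_size => traject_uniq.
  by move/eqP; rewrite nth_uniq ?size_traject // => /eqP /val_inj.
move=> k; rewrite /=; case: (ltngtP k.+1 n.+1) => [k_lt||k_eq].
- by rewrite modn_small.
- by rewrite ltnNge ltn_ord.
- have -> : (k.+1 %% n.+1 = 0)%N by rewrite k_eq modnn.
  by rewrite -iterS k_eq -[in RHS](iter_porbit pi ord0) orbit_size.
Qed.

Section ReindexCycle.
Variables (R : comNzRingType) (X : finType) (F : X -> X -> R).

Lemma sum_prod_conj K (pi rho sg : 'I_K -> 'I_K) :
  injective sg -> (forall k, pi (sg k) = sg (rho k)) ->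
  \sum_(x : {ffun 'I_K -> X}) \prod_j F (x j) (x (pi j))
  = \sum_(x : {ffun 'I_K -> X}) \prod_k F (x k) (x (rho k)).
Proof.
move=> sg_inj sg_conj; have [sg' sgK sg'K] := injF_bij sg_inj.
rewrite (reindex (fun x : {ffun 'I_K -> X} => [ffun j => x (sg' j)])) /=.
  apply: eq_bigr => x _; rewrite (reindex_inj sg_inj) /=.
  by apply: eq_bigr => k _; rewrite sg_conj !ffunE !sgK.
exists (fun x : {ffun 'I_K -> X} => [ffun k => x (sg k)]) => x _.
  by apply/ffunP => k; rewrite !ffunE sgK.
by apply/ffunP => j; rewrite !ffunE sg'K.
Qed.

Lemma sum_prod_full_cycle n (pi : {perm 'I_n.+1}) : full_cycle pi ->
  \sum_(x : {ffun 'I_n.+1 -> X}) \prod_j F (x j) (x (pi j))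
  = \sum_(x : {ffun 'I_n.+1 -> X}) \prod_k F (x k) (x (ordS k)).
Proof. by case/full_cycle_conj_ordS => sg; exact: sum_prod_conj. Qed.

End ReindexCycle.

Lemma sum_cycle_prod_le_expR (R : realType) (X : finType) (G : X -> X -> R) n :
  0 < frob2 G ->
  \sum_(y : {ffun 'I_n.+2 -> X}) \prod_(k < n.+2) G (y k) (y (ordS k))
  <= expR (n.+2%:R * (ln (frob2 G) / 2)).
Proof.
move=> F_gt0; set S := \sum_y _; set T := expR _.
have T2 : T ^+ 2 = frob2 G ^+ n.+2.
  rewrite -expRM_natl (_ : 2%:R * _ = n.+2%:R * ln (frob2 G)); last by field.
  by rewrite expRM_natl lnK ?posrE.
have := sqr_sum_cycle_prod_le n G; rewrite -/S -T2 => S2_le.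
have : 0 <= T := expR_ge0 _.
nra.
Qed.

Section Bhattacharyya.
Variables (R : realType) (X Y : finType) (P : X -> R) (W : X -> Y -> R).

Lemma bhat_coef_ge0 a b : 0 <= bhat_coef W a b.
Proof. by apply: sumr_ge0 => y _; exact: sqrtr_ge0. Qed.

Lemma bhat_coef_diag a : trans_kernel W -> bhat_coef W a a = 1.
Proof.
move=> /(_ a) [W_ge0 W_sum]; rewrite -W_sum; apply: eq_bigr => y _.
by rewrite -expr2 sqrtr_sqr ger0_norm.
Qed.

Lemma expeR_Nbhat_dist a b : expeR (- bhat_dist W a b)%E = (bhat_coef W a b)%:E.
Proof.
rewrite /bhat_dist; case: eqP => [-> //|/eqP B_neq0] /=.
by rewrite opprK lnK // posrE lt_neqAle eq_sym B_neq0 bhat_coef_ge0.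
Qed.

Definition bhat_kernel a b := Num.sqrt (P a) * bhat_coef W a b * Num.sqrt (P b).

Hypothesis P_ge0 : forall x, 0 <= P x.

Lemma bhat_kernel_sqr a b : bhat_kernel a b ^+ 2 = P a * P b * bhat_coef W a b ^+ 2.
Proof. by rewrite /bhat_kernel !exprMn !sqr_sqrtr //; ring. Qed.

Lemma cyc_expect_bhat_kernel K (pi : {perm 'I_K}) :
  cyc_expect P W pi =
  (\sum_(x : {ffun 'I_K -> X}) \prod_j bhat_kernel (x j) (x (pi j)))%:E.
Proof.
rewrite /cyc_expect -sumEFin; apply: eq_bigr => x _.
rewrite -sumeN; last by move=> i j _ _; rewrite /bhat_dist; do 2!case: ifP.
rewrite (big_morph _ expeRD expeR0); under eq_bigr do rewrite expeR_Nbhat_dist.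
rewrite prodEFin -EFinM /bhat_kernel !big_split /= mulrAC; congr (_ * _)%:E.
rewrite [X in _ * X](_ : _ = \prod_j Num.sqrt (P (x j))); last first.
  by rewrite [RHS](reindex_inj (@perm_inj _ pi)).
rewrite -big_split /=.
by apply: eq_bigr => j _; rewrite -expr2 sqr_sqrtr.
Qed.

Lemma frob2_bhat_kernel_gt0 a : 0 < P a -> trans_kernel W -> 0 < frob2 bhat_kernel.
Proof.
move=> Pa_gt0 W_ker; rewrite /frob2 (bigD1 a) //= (bigD1 a) //= bhat_kernel_sqr.
rewrite bhat_coef_diag // expr1n mulr1 -addrA ltr_pwDl ?mulr_gt0 //.
rewrite addr_ge0 ?sumr_ge0 // => *; first exact: sqr_ge0.
by apply: sumr_ge0 => *; exact: sqr_ge0.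
Qed.

Lemma psi2_le_ln_frob2 : 0 < frob2 bhat_kernel ->
  (psi2 P W <= (- (ln (frob2 bhat_kernel) / 2))%:E)%E.
Proof.
set F := frob2 bhat_kernel => F_gt0; set B := bhat_coef W.
pose Q (p : X * X) := bhat_kernel p.1 p.2 ^+ 2 / F.
have Q_pmf : pmf2 Q.
  split=> [p|]; first by rewrite divr_ge0 ?sqr_ge0 ?ltW.
  rewrite -mulr_suml (_ : \sum_p _ = F) ?divff ?gt_eqF //.
  exact/esym/pair_bigA.
apply: ereal_inf_lbound; exists Q => //.
have Q_dist p : ((Q p)%:E * bhat_dist W p.1 p.2)%E = (Q p * - ln (B p.1 p.2))%:E.
  rewrite /bhat_dist -/B; case: eqP => [B0|//].
  by rewrite /Q bhat_kernel_sqr -/B B0 expr0n /= !(mulr0, mul0r, mul0e).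
rewrite /bhat_dist2; under eq_bigr do rewrite Q_dist.
rewrite sumEFin -EFinD /KL2 mulr_suml -big_split /=; congr (_%:E).
transitivity (\sum_p - (ln F / 2) * Q p); last first.
  by rewrite -mulr_sumr (proj2 Q_pmf) mulr1.
apply: eq_bigr => p _.
have [Qp0|Qp_neq0] := eqVneq (Q p) 0; first by rewrite Qp0 !(mulr0, mul0r, addr0).
have [P1_gt0 P2_gt0 B_gt0] : [/\ 0 < P p.1, 0 < P p.2 & 0 < B p.1 p.2].
  move: Qp_neq0; rewrite /Q bhat_kernel_sqr -/B !mulf_eq0 invr_eq0 !negb_or.
  case/andP=> /and3P[/andP[P1_neq0 P2_neq0] B_neq0 _] _.
  by rewrite !lt_def P1_neq0 P2_neq0 B_neq0 !P_ge0 bhat_coef_ge0.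
have -> : Q p / (P p.1 * P p.2) = B p.1 p.2 ^+ 2 / F.
  by rewrite /Q bhat_kernel_sqr mulrAC [_ * B _ _ ^+ 2]mulrC mulfK ?mulf_neq0 ?gt_eqF.
by rewrite ln_div ?posrE ?exprn_gt0 // lnXn // mulr2n; field.
Qed.

End Bhattacharyya.

Theorem lemma2 (R : realType) (X Y : finType) (P : X -> R) (W : X -> Y -> R)
    (K : nat) (pi : {perm 'I_K}) :
  full_pmf P -> trans_kernel W -> (2 <= K)%N -> full_cycle pi ->
  (cyc_expect P W pi <= expeR (- (K%:R)%:E * psi2 P W))%E.
Proof.
move=> [P_gt0 P_sum] W_ker.
case: K pi => [|[|n]] pi // _ pi_cycle.
have P_ge0 x : 0 <= P x := ltW (P_gt0 x).
have [a _] : exists a : X, true.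
  case: (pickP (@predT X)) => [a|X_empty]; first by exists a.
  by move: P_sum; rewrite big_pred0 // => /eqP; rewrite eq_sym oner_eq0.
set G := bhat_kernel P W.
have F_gt0 : 0 < frob2 G := frob2_bhat_kernel_gt0 P_ge0 (P_gt0 a) W_ker.
rewrite cyc_expect_bhat_kernel // sum_prod_full_cycle //.
apply: (@le_trans _ _ (expeR (n.+2%:R * (ln (frob2 G) / 2))%:E)).
  by rewrite /= lee_fin sum_cycle_prod_le_expR.
rewrite lee_expeR mulNe -muleN EFinM lee_wpmul2l ?lee_fin // leeNr -EFinN.
exact: psi2_le_ln_frob2.
Qed.
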